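(* Let $\{X_s,\|\cdot\|_s\}_{s\in\mathbb N_0}$ be a sequence of Banach spaces satisfying (F1)–(F3), let $\{\Theta_s\}_{s\in\mathbb N_0}$ be a sequence of $CB$-spaces satisfying (F1)–(F3), and let $\{g_i\}_{i=1}^\infty\in (X_F^* )^{\mathbb N}$ be an $F$-Bessel sequence for $X_F$ with respect to $\Theta_F$. Then: (a) there exists $\{f_i\}_{i=1}^\infty\in(X_F)^{\mathbb N}$ which is a $DF$-Bessel sequence for $X_F^*$ with respect to $\Theta_F^*$ and satisfies $f=\sum_{i=1}^\infty g_i(f)f_i$ for all $f\in X_F$ (convergence in $X_F$) if and only if $\{g_i\}$ is an $F$-frame for $X_F$ with respect to $\Theta_F$; (b) if $\{f_i\}\in(X_F)^{\mathbb N}$ is a $DF$-Bessel sequence for $X_F^*$ with respect to $\Theta_F^*$ with $f=\sum_{i=1}^\infty g_i(f)f_i$ for all $f\in X_F$, then: if all $\Theta_s$ and $\Theta_s^*$ are $CB$-spaces, $\{f_i\}$ is a pre-$DF$-frame for $X_F^*$ with respect to $\Theta_F^*$; and if all $\Theta_s$ are reflexive $CB$-spaces, $\{f_i\}$ is a $DF$-frame for $X_F^*$ with respect to $\Theta_F^*$.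
   Context: Conditions (F1)–(F3) for a sequence $\{Y_s,|\cdot|_s\}_{s\in\mathbb N_0}$ of separable Banach spaces: (F1) $\{0\}\neq\bigcap_sY_s\subseteq\dots\subseteq Y_1\subseteq Y_0$; (F2) $|\cdot|_0\le|\cdot|_1\le\dots$; (F3) $Y_F:=\bigcap_sY_s$ dense in each $Y_s$. $X_F=\bigcap_sX_s$, $\Theta_F=\bigcap_s\Theta_s$. $BK$-space: Banach sequence space with continuous coordinate functionals; $CB$-space: $BK$-space in which the canonical vectors $e_i$ form a Schauder basis. For a $CB$-space $\Theta$, $\Theta^*$ is identified with the $BK$-space $\{\{g(e_i)\}_{i=1}^\infty:g\in\Theta^*\}$ normed by $|||\{g(e_i)\}|||:=\|g\|_{\Theta^*}$. For a Banach space $X$ and $BK$-space $\Theta$: $\{g_i\}\subset X^*$ is a $\Theta$-Bessel sequence if $\{g_i(f)\}\in\Theta$ and $|||\{g_i(f)\}|||\le B\|f\|$ for all $f\in X$; a $\Theta$-frame if moreover $A\|f\|\le|||\{g_i(f)\}|||$ with $A>0$; a Banach frame w.r.t. $\Theta$ if it is a $\Theta$-frame and there is a bounded $V:\Theta\to X$ with $V(\{g_i(f)\})=f$. (For $\{f_i\}\subset X\subseteq X^{**}$ these are applied to $X^*$ via $g\mapsto\{g(f_i)\}$.) $F$-Bessel sequence / pre-$F$-frame / $F$-frame: $\{g_i\}\in(X_F^* )^{\mathbb N}$ with $\{g_i(f)\}\in\Theta_F$ for $f\in X_F$ and for each $s$ a constant $B_s$ with $|||\{g_i(f)\}|||_s\le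 B_s\|f\|_s$ ($F$-Bessel); plus $A_s\|f\|_s\le|||\{g_i(f)\}|||_s$, $A_s>0$ (pre-$F$-frame); plus an $F$-bounded $V:\Theta_F\to X_F$ with $V(\{g_i(f)\})=f$ for $f\in X_F$ ($F$-frame), $F$-bounded meaning $\|Vc\|_s\le K_s|||c|||_s$ for every $s$. $\{f_i\}\in(X_F)^{\mathbb N}$ is a $DF$-Bessel sequence (resp. pre-$DF$-frame, resp. $DF$-frame) for $X_F^*$ w.r.t. $\Theta_F^*$ if for every $s$ it is a $\Theta_s^*$-Bessel sequence (resp. $\Theta_s^*$-frame, resp. Banach frame w.r.t. $\Theta_s^*$) for $X_s^*$. *)

From Stdlib Require Import Reals Lra ClassicalEpsilon.
Open Scope R_scope.
Set Implicit Arguments.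

Record RVS := { car :> Type; vadd : car -> car -> car; vscal : R -> car -> car; vzero : car }.
Arguments vadd {r}. Arguments vscal {r}. Arguments vzero {r}.

Definition vs_axioms (V : RVS) : Prop :=
  (forall x y z : V, vadd x (vadd y z) = vadd (vadd x y) z) /\
  (forall x y : V, vadd x y = vadd y x) /\
  (forall x : V, vadd vzero x = x) /\
  (forall x : V, vadd x (vscal (-1) x) = vzero) /\
  (forall (a : R) (x y : V), vscal a (vadd x y) = vadd (vscal a x) (vscal a y)) /\
  (forall (a b : R) (x : V), vscal (a + b) x = vadd (vscal a x) (vscal b x)) /\
  (forall (a b : R) (x : V), vscal a (vscal b x) = vscal (a * b) x) /\
  (forall x : V, vscal 1 x = x).

Definition vsub {V : RVS} (x y : V) : V := vadd x (vscal (-1) y).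

Fixpoint vsum {V : RVS} (u : nat -> V) (n : nat) : V :=
  match n with O => vzero | S m => vadd (vsum u m) (u m) end.

(* real sequences (indexed from 0) with pointwise operations *)
Definition Rseq := nat -> R.
Definition seqVS : RVS :=
  {| car := Rseq; vadd := fun a b i => a i + b i; vscal := fun t a i => t * a i;
     vzero := fun _ => 0 |}.
Definition e (i : nat) : seqVS := fun j => if Nat.eqb i j then 1 else 0.

(* supremum of a set of reals (meaningful for nonempty bounded sets) *)
Definition Rsup (E : R -> Prop) : R := epsilon (inhabits 0) (fun m => is_lub E m).

Section Normed.
Context {V : RVS}.

Definition is_subspace (S : V -> Prop) : Prop :=
  S vzero /\ (forall x y, S x -> S y -> S (vadd x y)) /\
  (forall a x, S x -> S (vscal a x)).

Definition is_norm_on (S : V -> Prop) (N : V -> R) : Prop :=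
  forall x y a, S x -> S y ->
    0 <= N x /\ (N x = 0 -> x = vzero) /\ N (vscal a x) = Rabs a * N x /\
    N (vadd x y) <= N x + N y.

Definition conv_in (N : V -> R) (u : nat -> V) (l : V) : Prop :=
  forall eps, 0 < eps -> exists n0, forall n, (n0 <= n)%nat -> N (vsub (u n) l) < eps.

Definition cauchy_in (N : V -> R) (u : nat -> V) : Prop :=
  forall eps, 0 < eps -> exists n0, forall n m, (n0 <= n)%nat -> (n0 <= m)%nat ->
    N (vsub (u n) (u m)) < eps.

Definition complete_in (S : V -> Prop) (N : V -> R) : Prop :=
  forall u, (forall n, S (u n)) -> cauchy_in N u -> exists l, S l /\ conv_in N u l.

Definition separable_in (S : V -> Prop) (N : V -> R) : Prop :=
  exists d : nat -> V, (forall n, S (d n)) /\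
    forall x, S x -> forall eps, 0 < eps -> exists n, N (vsub x (d n)) < eps.

Definition banach (S : V -> Prop) (N : V -> R) : Prop :=
  is_subspace S /\ is_norm_on S N /\ complete_in S N.

Definition sep_banach (S : V -> Prop) (N : V -> R) : Prop :=
  banach S N /\ separable_in S N.

(* (F1)-(F3) for a sequence of separable Banach spaces *)
Definition interF (Y : nat -> V -> Prop) (x : V) : Prop := forall s, Y s x.

Definition Fseq (Y : nat -> V -> Prop) (N : nat -> V -> R) : Prop :=
  (forall s, sep_banach (Y s) (N s)) /\
  (* (F1) *)
  (exists x, interF Y x /\ x <> vzero) /\ (forall s x, Y (S s) x -> Y s x) /\
  (* (F2) *)
  (forall s x, Y (S s) x -> N s x <= N (S s) x) /\
  (* (F3) *)
  (forall s x, Y s x -> forall eps, 0 < eps ->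
     exists y, interF Y y /\ N s (vsub x y) < eps).

Definition is_dual (S : V -> Prop) (N : V -> R) (g : V -> R) : Prop :=
  (forall x y, S x -> S y -> g (vadd x y) = g x + g y) /\
  (forall a x, S x -> g (vscal a x) = a * g x) /\
  (exists C, forall x, S x -> Rabs (g x) <= C * N x).

Definition dnorm (S : V -> Prop) (N : V -> R) (g : V -> R) : R :=
  Rsup (fun r => exists x, S x /\ N x <= 1 /\ r = Rabs (g x)).

Definition is_bidual (S : V -> Prop) (N : V -> R) (P : (V -> R) -> R) : Prop :=
  (forall g h, is_dual S N g -> is_dual S N h -> P (fun x => g x + h x) = P g + P h) /\
  (forall a g, is_dual S N g -> P (fun x => a * g x) = a * P g) /\
  (exists C, forall g, is_dual S N g -> Rabs (P g) <= C * dnorm S N g).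

Definition reflexive (S : V -> Prop) (N : V -> R) : Prop :=
  forall P, is_bidual S N P -> exists x, S x /\ forall g, is_dual S N g -> P g = g x.
End Normed.

Definition BK (Th : seqVS -> Prop) (TN : seqVS -> R) : Prop :=
  banach Th TN /\ forall i, exists C, forall c, Th c -> Rabs (c i) <= C * TN c.

Definition CB (Th : seqVS -> Prop) (TN : seqVS -> R) : Prop :=
  BK Th TN /\ (forall i, Th (e i)) /\
  (forall c, Th c -> exists! a : Rseq,
      conv_in TN (fun n => vsum (fun i => vscal (a i) (e i)) n) c).

(* Theta^* identified with the BK-space {(g(e_i))_i : g in Theta^*}, normed by ||g|| *)
Definition dualseq (Th : seqVS -> Prop) (TN : seqVS -> R) (d : Rseq) : Prop :=
  exists g, is_dual Th TN g /\ forall i, g (e i) = d i.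

Definition dualseq_norm (Th : seqVS -> Prop) (TN : seqVS -> R) (d : Rseq) : R :=
  Rsup (fun r => exists g, is_dual Th TN g /\ (forall i, g (e i) = d i) /\
                           r = dnorm Th TN g).

Section Frames.
Context {V : RVS}.
Variables (X : nat -> V -> Prop) (N : nat -> V -> R)
          (Th : nat -> seqVS -> Prop) (TN : nat -> seqVS -> R).

(* X_F^* : linear functionals on X_F continuous for the Frechet topology *)
Definition XF_dual (h : V -> R) : Prop :=
  (forall x y, interF X x -> interF X y -> h (vadd x y) = h x + h y) /\
  (forall a x, interF X x -> h (vscal a x) = a * h x) /\
  (exists s C, forall x, interF X x -> Rabs (h x) <= C * N s x).

Definition F_Bessel (g : nat -> V -> R) : Prop :=
  (forall i, XF_dual (g i)) /\
  (forall f, interF X f -> interF Th (fun i => g i f)) /\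
  (forall s, exists B, forall f, interF X f -> TN s (fun i => g i f) <= B * N s f).

Definition pre_F_frame (g : nat -> V -> R) : Prop :=
  F_Bessel g /\
  (forall s, exists A, 0 < A /\ forall f, interF X f -> A * N s f <= TN s (fun i => g i f)).

Definition F_bounded_op (W : seqVS -> V) : Prop :=
  (forall c d, interF Th c -> interF Th d -> W (vadd c d) = vadd (W c) (W d)) /\
  (forall a c, interF Th c -> W (vscal a c) = vscal a (W c)) /\
  (forall c, interF Th c -> interF X (W c)) /\
  (forall s, exists K, forall c, interF Th c -> N s (W c) <= K * TN s c).

Definition F_frame (g : nat -> V -> R) : Prop :=
  pre_F_frame g /\
  exists W, F_bounded_op W /\ forall f, interF X f -> W (fun i => g i f) = f.

Definition Bessel_dual_s (s : nat) (f : nat -> V) : Prop :=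
  (forall g, is_dual (X s) (N s) g -> dualseq (Th s) (TN s) (fun i => g (f i))) /\
  (exists B, forall g, is_dual (X s) (N s) g ->
     dualseq_norm (Th s) (TN s) (fun i => g (f i)) <= B * dnorm (X s) (N s) g).

Definition frame_dual_s (s : nat) (f : nat -> V) : Prop :=
  Bessel_dual_s s f /\
  (exists A, 0 < A /\ forall g, is_dual (X s) (N s) g ->
     A * dnorm (X s) (N s) g <= dualseq_norm (Th s) (TN s) (fun i => g (f i))).

(* bounded linear operator Theta_s^* -> X_s^* (functionals compared on X_s) *)
Definition bounded_op_dual_s (s : nat) (W : Rseq -> V -> R) : Prop :=
  (forall c d, dualseq (Th s) (TN s) c -> dualseq (Th s) (TN s) d ->
     forall x, X s x -> W (fun i => c i + d i) x = W c x + W d x) /\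
  (forall a c, dualseq (Th s) (TN s) c ->
     forall x, X s x -> W (fun i => a * c i) x = a * W c x) /\
  (forall c, dualseq (Th s) (TN s) c -> is_dual (X s) (N s) (W c)) /\
  (exists K, forall c, dualseq (Th s) (TN s) c ->
     dnorm (X s) (N s) (W c) <= K * dualseq_norm (Th s) (TN s) c).

Definition Banach_frame_dual_s (s : nat) (f : nat -> V) : Prop :=
  frame_dual_s s f /\
  exists W, bounded_op_dual_s s W /\
    forall g, is_dual (X s) (N s) g -> forall x, X s x -> W (fun i => g (f i)) x = g x.

Definition DF_Bessel (f : nat -> V) : Prop :=
  (forall i, interF X (f i)) /\ forall s, Bessel_dual_s s f.
Definition pre_DF_frame (f : nat -> V) : Prop :=
  (forall i, interF X (f i)) /\ forall s, frame_dual_s s f.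
Definition DF_frame (f : nat -> V) : Prop :=
  (forall i, interF X (f i)) /\ forall s, Banach_frame_dual_s s f.

(* f = sum_i g_i(f) f_i for all f in X_F, convergence in X_F (in every norm) *)
Definition reconstructs (g : nat -> V -> R) (f : nat -> V) : Prop :=
  forall x, interF X x -> forall s,
    conv_in (N s) (fun n => vsum (fun i => vscal (g i x) (f i)) n) x.
End Frames.

(* Write [analysis x = (g_i x)_i].  The proof rests on three general facts
   established first: bounded functionals extend from dense subspaces with the
   same bound and are determined there ([dense_extension], [dual_eq_on_dense]);
   separable normed spaces admit norming functionals ([hahn_banach_separable]);
   functionals on a CB-space are determined by their values on the basis.
   (a) If [{f_i}] is DF-Bessel and reconstructs, Hahn-Banach and the
   [Theta_s^*]-Bessel bound give [N_s (sum c_i f_i) <= B_s |c|_s] for finite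
   sums, so by completeness and (F1)-(F3) the synthesis series converges in [X_F]
   and defines an F-bounded left inverse of [analysis].  Conversely an F-bounded
   left inverse [W] yields [f_i = W e_i], since [h o W] extends to [Theta_s].
   (b) If [h'] in [Theta_s^*] represents [(h f_i)_i] then [h = h' o analysis] on
   [X_F]; this gives the lower DF-frame bound, and extending [h' o analysis]
   from [X_F] gives the bounded reconstruction operator [Theta_s^* -> X_s^*]. *)

From Stdlib Require Import Reals Lra Lia ClassicalEpsilon Classical FunctionalExtensionality.
Open Scope R_scope.

Lemma le_eps (a b : R) : (forall eps, 0 < eps -> a <= b + eps) -> a <= b.
Proof.
  intros H. destruct (Rle_dec a b) as [h|h]; auto.
  assert (Hpos : 0 < (a - b) / 2) by lra. specialize (H _ Hpos). lra.
Qed.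

Lemma eq_eps (a b : R) : (forall eps, 0 < eps -> Rabs (a - b) <= eps) -> a = b.
Proof.
  intros H. destruct (Req_dec a b) as [h|h]; auto.
  assert (Hpos : 0 < Rabs (a - b) / 2).
  { assert (Rabs (a - b) > 0) by (apply Rabs_pos_lt; lra). lra. }
  specialize (H _ Hpos). lra.
Qed.

(* [eps / (k + 1)] is the error budget that survives multiplication by [k]. *)
Lemma pos_div eps k : 0 <= k -> 0 < eps -> 0 < eps / (k + 1).
Proof. intros; apply Rdiv_lt_0_compat; lra. Qed.

Lemma small_mul k eps : 0 <= k -> 0 < eps -> k * (eps / (k + 1)) < eps.
Proof.
  intros Hk He. assert (E : k * (eps / (k + 1)) = eps - eps / (k + 1)) by (field; lra).
  pose proof (pos_div eps k Hk He). lra.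
Qed.

Lemma Rabs_le_inv a b : Rabs a <= b -> - b <= a <= b.
Proof. unfold Rabs; destruct (Rcase_abs a); lra. Qed.

Lemma Rabs_m1 : Rabs (-1) = 1.
Proof. rewrite Rabs_left by lra. lra. Qed.

Lemma Rsup_lub (E : R -> Prop) : bound E -> (exists x, E x) -> is_lub E (Rsup E).
Proof.
  intros Hb He. unfold Rsup. apply epsilon_spec.
  destruct (completeness E Hb He) as [m Hm]. eauto.
Qed.

Lemma Rsup_eq (E : R -> Prop) m : is_lub E m -> Rsup E = m.
Proof.
  intros H. assert (Hne : exists x, E x).
  { apply NNPP. intros Hempty. destruct H as [_ H].
    assert (Hub : is_upper_bound E (m - 1)) by (intros x Hx; exfalso; eauto).
    specialize (H _ Hub). lra. }
  apply (is_lub_u E); auto. apply Rsup_lub; auto. exists m. apply H.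
Qed.

Lemma Rsup_ub (E : R -> Prop) x : bound E -> E x -> x <= Rsup E.
Proof. intros Hb Hx. apply (Rsup_lub E Hb (ex_intro _ x Hx)). auto. Qed.

Lemma Rsup_le (E : R -> Prop) b : (exists x, E x) -> (forall x, E x -> x <= b) -> Rsup E <= b.
Proof.
  intros He Hb. assert (HB : bound E) by (exists b; intros x; auto).
  apply (Rsup_lub E HB He). intros x; auto.
Qed.

Lemma Un_cv_const (c : R) : Un_cv (fun _ => c) c.
Proof. intros eps He. exists 0%nat. intros n _. unfold Rdist. rewrite Rminus_diag, Rabs_R0. lra. Qed.

Existing Class vs_axioms.
Existing Class is_subspace.
Existing Class is_norm_on.

Section VectorAlgebra.
Context {V : RVS} {Hv : vs_axioms V}.

Lemma vadd_assoc (x y z : V) : vadd x (vadd y z) = vadd (vadd x y) z. Proof. apply Hv. Qed.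
Lemma vadd_comm (x y : V) : vadd x y = vadd y x. Proof. apply Hv. Qed.
Lemma vadd_0l (x : V) : vadd vzero x = x. Proof. apply Hv. Qed.
Lemma vadd_opp (x : V) : vadd x (vscal (-1) x) = vzero. Proof. apply Hv. Qed.
Lemma vscal_addv a (x y : V) : vscal a (vadd x y) = vadd (vscal a x) (vscal a y). Proof. apply Hv. Qed.
Lemma vscal_adds a b (x : V) : vscal (a + b) x = vadd (vscal a x) (vscal b x). Proof. apply Hv. Qed.
Lemma vscal_mul a b (x : V) : vscal a (vscal b x) = vscal (a * b) x. Proof. apply Hv. Qed.
Lemma vscal_1 (x : V) : vscal 1 x = x. Proof. apply Hv. Qed.

Lemma vadd_0r (x : V) : vadd x vzero = x.
Proof. rewrite vadd_comm; apply vadd_0l. Qed.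

Lemma vadd_oppl (x : V) : vadd (vscal (-1) x) x = vzero.
Proof. rewrite vadd_comm; apply vadd_opp. Qed.

Lemma vadd_cancel (a b c : V) : vadd a b = vadd a c -> b = c.
Proof.
  intros H. rewrite <- (vadd_0l b), <- (vadd_0l c), <- (vadd_oppl a), <- !vadd_assoc, H.
  reflexivity.
Qed.

Lemma vscal_0 (x : V) : vscal 0 x = vzero.
Proof.
  apply (vadd_cancel (vscal 0 x)). rewrite vadd_0r, <- vscal_adds. f_equal; ring.
Qed.

Lemma vscal_zero a : vscal a (@vzero V) = vzero.
Proof.
  apply (vadd_cancel (vscal a vzero)). rewrite vadd_0r, <- vscal_addv, vadd_0l. reflexivity.
Qed.

Lemma vscal_m1_m1 (x : V) : vscal (-1) (vscal (-1) x) = x.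
Proof. rewrite vscal_mul. replace (-1 * -1) with 1 by ring. apply vscal_1. Qed.

Lemma vsub_diag (x : V) : vsub x x = vzero.
Proof. apply vadd_opp. Qed.

Lemma vsub_add (x y : V) : vadd (vsub x y) y = x.
Proof. unfold vsub. rewrite <- vadd_assoc, vadd_oppl, vadd_0r. reflexivity. Qed.

Lemma vsub_eq0 (x y : V) : vsub x y = vzero -> x = y.
Proof. intros H. rewrite <- (vsub_add x y), H, vadd_0l. reflexivity. Qed.

Lemma vsub_0r (x : V) : vsub x vzero = x.
Proof. unfold vsub. rewrite vscal_zero, vadd_0r. reflexivity. Qed.

Lemma vadd_swap (a b c d : V) : vadd (vadd a b) (vadd c d) = vadd (vadd a c) (vadd b d).
Proof.
  rewrite <- !vadd_assoc. f_equal. rewrite !vadd_assoc. f_equal. apply vadd_comm.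
Qed.

Lemma vsub_vadd (a b c d : V) : vsub (vadd a b) (vadd c d) = vadd (vsub a c) (vsub b d).
Proof. unfold vsub. rewrite vscal_addv. apply vadd_swap. Qed.

Lemma vscal_sub t (a b : V) : vscal t (vsub a b) = vsub (vscal t a) (vscal t b).
Proof. unfold vsub. rewrite vscal_addv, !vscal_mul. do 2 f_equal. ring. Qed.

Lemma vsub_swap (a b : V) : vsub a b = vscal (-1) (vsub b a).
Proof. unfold vsub. rewrite vscal_addv, vscal_m1_m1. apply vadd_comm. Qed.

Lemma vsub_chain (a b c : V) : vsub a c = vadd (vsub a b) (vsub b c).
Proof.
  unfold vsub. rewrite <- vadd_assoc. f_equal. rewrite vadd_assoc, vadd_oppl, vadd_0l.
  reflexivity.
Qed.

Lemma vsum_add (u w : nat -> V) n :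
  vsum (fun i => vadd (u i) (w i)) n = vadd (vsum u n) (vsum w n).
Proof. induction n; simpl. - now rewrite vadd_0l. - rewrite IHn. apply vadd_swap. Qed.

Lemma vsum_scal a (u : nat -> V) n : vsum (fun i => vscal a (u i)) n = vscal a (vsum u n).
Proof. induction n; simpl. - now rewrite vscal_zero. - rewrite IHn, vscal_addv. reflexivity. Qed.
End VectorAlgebra.

Fixpoint rsum (u : nat -> R) (n : nat) : R :=
  match n with O => 0 | S m => rsum u m + u m end.

Lemma rsum_ext (a b : nat -> R) n : (forall i, a i = b i) -> rsum a n = rsum b n.
Proof. intros H; induction n; simpl; auto. rewrite IHn, H; auto. Qed.

Section Normed.
Context {V : RVS} {Hv : vs_axioms V} {S : V -> Prop} {N : V -> R}
  {HS : is_subspace S} {HN : is_norm_on S N}.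

Lemma sub_zero : S vzero. Proof. apply HS. Qed.
Lemma sub_add x y : S x -> S y -> S (vadd x y). Proof. apply HS. Qed.
Lemma sub_scal a x : S x -> S (vscal a x). Proof. apply HS. Qed.
Lemma sub_sub x y : S x -> S y -> S (vsub x y).
Proof. intros; unfold vsub; apply sub_add; auto; apply sub_scal; auto. Qed.
Lemma sub_vsum (u : nat -> V) n : (forall i, S (u i)) -> S (vsum u n).
Proof. intros H; induction n; simpl. - apply sub_zero. - apply sub_add; auto. Qed.
Lemma sub_lincomb (c : nat -> R) (u : nat -> V) n :
  (forall i, S (u i)) -> S (vsum (fun i => vscal (c i) (u i)) n).
Proof. intros H. apply sub_vsum. intros; apply sub_scal; auto. Qed.

Lemma norm_nonneg x : S x -> 0 <= N x. Proof. intros H; apply (HN x x 0 H H). Qed.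
Lemma norm_eq0 x : S x -> N x = 0 -> x = vzero. Proof. intros H; apply (HN x x 0 H H). Qed.
Lemma norm_scal a x : S x -> N (vscal a x) = Rabs a * N x. Proof. intros H; apply (HN x x a H H). Qed.
Lemma norm_triangle x y : S x -> S y -> N (vadd x y) <= N x + N y.
Proof. intros H H'; apply (HN x y 0 H H'). Qed.

Lemma norm_zero : N vzero = 0.
Proof. rewrite <- (vscal_0 vzero), norm_scal by apply sub_zero. rewrite Rabs_R0; ring. Qed.

Lemma norm_opp x : S x -> N (vscal (-1) x) = N x.
Proof. intros; rewrite norm_scal by auto. rewrite Rabs_m1; ring. Qed.

Lemma dist_sym x y : S x -> S y -> N (vsub x y) = N (vsub y x).
Proof. intros. rewrite (vsub_swap x y). apply norm_opp, sub_sub; auto. Qed.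

Lemma dist_triangle x y z : S x -> S y -> S z -> N (vsub x z) <= N (vsub x y) + N (vsub y z).
Proof. intros. rewrite (vsub_chain x y z). apply norm_triangle; apply sub_sub; auto. Qed.

Lemma norm_reverse_triangle x y : S x -> S y -> Rabs (N x - N y) <= N (vsub x y).
Proof.
  intros Hx Hy.
  assert (Hxy : N x <= N (vsub x y) + N y).
  { rewrite <- (vsub_add x y) at 1. apply norm_triangle; auto. apply sub_sub; auto. }
  assert (Hyx : N y <= N (vsub y x) + N x).
  { rewrite <- (vsub_add y x) at 1. apply norm_triangle; auto. apply sub_sub; auto. }
  rewrite (dist_sym y x) in Hyx by auto. apply Rabs_le; lra.
Qed.

Lemma conv_unique u x y : (forall n, S (u n)) -> S x -> S y ->
  conv_in N u x -> conv_in N u y -> x = y.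
Proof.
  intros Hu Hx Hy Cx Cy. apply vsub_eq0, norm_eq0; [apply sub_sub; auto|].
  apply Rle_antisym; [|apply norm_nonneg, sub_sub; auto].
  apply le_eps; intros eps He.
  destruct (Cx (eps/2)) as [n1 H1]; try lra. destruct (Cy (eps/2)) as [n2 H2]; try lra.
  set (n := max n1 n2).
  specialize (H1 n (Nat.le_max_l _ _)). specialize (H2 n (Nat.le_max_r _ _)).
  pose proof (dist_triangle x (u n) y Hx (Hu _) Hy) as Htri.
  rewrite (dist_sym x (u n)) in Htri by auto. lra.
Qed.

Lemma conv_cauchy u x : (forall n, S (u n)) -> S x -> conv_in N u x -> cauchy_in N u.
Proof.
  intros Hu Hx C eps He. destruct (C (eps/2)) as [n0 H]; try lra.
  exists n0; intros n m Hn Hm. pose proof (dist_triangle (u n) x (u m) (Hu _) Hx (Hu _)).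
  rewrite (dist_sym x (u m)) in H0 by auto. pose proof (H n Hn); pose proof (H m Hm). lra.
Qed.

Lemma conv_add u w x y : (forall n, S (u n)) -> (forall n, S (w n)) -> S x -> S y ->
  conv_in N u x -> conv_in N w y -> conv_in N (fun n => vadd (u n) (w n)) (vadd x y).
Proof.
  intros Hu Hw Hx Hy Cx Cy eps He.
  destruct (Cx (eps/2)) as [n1 H1]; try lra. destruct (Cy (eps/2)) as [n2 H2]; try lra.
  exists (max n1 n2); intros n Hn. rewrite vsub_vadd.
  pose proof (norm_triangle (vsub (u n) x) (vsub (w n) y)
                (sub_sub _ _ (Hu n) Hx) (sub_sub _ _ (Hw n) Hy)).
  specialize (H1 n ltac:(lia)); specialize (H2 n ltac:(lia)). lra.
Qed.

Lemma lipschitz_cont (phi : V -> R) L u x : 0 <= L ->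
  (forall n, Rabs (phi (u n) - phi x) <= L * N (vsub (u n) x)) ->
  conv_in N u x -> Un_cv (fun n => phi (u n)) (phi x).
Proof.
  intros HL Hlip C eps He. destruct (C (eps / (L + 1)) (pos_div _ _ HL He)) as [n0 Hn0].
  exists n0. intros n Hn. unfold Rdist. eapply Rle_lt_trans; [apply Hlip|].
  eapply Rle_lt_trans; [|apply (small_mul L eps HL He)].
  apply Rmult_le_compat_l; auto. left; apply Hn0; lia.
Qed.

Lemma conv_scal a u x : (forall n, S (u n)) -> S x ->
  conv_in N u x -> conv_in N (fun n => vscal a (u n)) (vscal a x).
Proof.
  intros Hu Hx Cx eps He. pose proof (Rabs_pos a) as Ha.
  destruct (Cx (eps / (Rabs a + 1)) (pos_div _ _ Ha He)) as [n1 H1].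
  exists n1; intros n Hn. rewrite <- vscal_sub, norm_scal by (apply sub_sub; auto).
  eapply Rle_lt_trans; [|apply (small_mul (Rabs a) eps Ha He)].
  apply Rmult_le_compat_l; auto. left; auto.
Qed.

Lemma norm_cont u x : (forall n, S (u n)) -> S x ->
  conv_in N u x -> Un_cv (fun n => N (u n)) (N x).
Proof.
  intros Hu Hx. apply (lipschitz_cont N 1); [lra|]. intros n.
  rewrite Rmult_1_l. apply norm_reverse_triangle; auto.
Qed.
End Normed.

Lemma dual_plus {W : RVS} {S : W -> Prop} {NN : W -> R} (g1 g2 : W -> R) :
  is_dual S NN g1 -> is_dual S NN g2 -> is_dual S NN (fun x => g1 x + g2 x).
Proof.
  intros [A1 [B1 [C1 H1]]] [A2 [B2 [C2 H2]]]. split; [|split].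
  - intros; rewrite A1, A2 by auto; ring.
  - intros; rewrite B1, B2 by auto; ring.
  - exists (C1 + C2). intros x Hx. eapply Rle_trans; [apply Rabs_triang|].
    pose proof (H1 x Hx); pose proof (H2 x Hx). lra.
Qed.

Lemma dual_mult {W : RVS} {S : W -> Prop} {NN : W -> R} (a : R) (g1 : W -> R) :
  is_dual S NN g1 -> is_dual S NN (fun x => a * g1 x).
Proof.
  intros [A1 [B1 [C1 H1]]]. split; [|split].
  - intros; rewrite A1 by auto; ring.
  - intros; rewrite B1 by auto; ring.
  - exists (Rabs a * C1). intros x Hx. rewrite Rabs_mult, Rmult_assoc.
    apply Rmult_le_compat_l; [apply Rabs_pos|auto].
Qed.

Definition dense_in {V : RVS} (D S : V -> Prop) (N : V -> R) : Prop :=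
  forall x, S x -> forall eps, 0 < eps -> exists y, D y /\ N (vsub x y) < eps.

Section Duals.
Context {V : RVS} {Hv : vs_axioms V} {S : V -> Prop} {N : V -> R}
  {HS : is_subspace S} {HN : is_norm_on S N}.

Section OneFunctional.
Context {h : V -> R} (Hh : is_dual S N h).

Lemma dual_add x y : S x -> S y -> h (vadd x y) = h x + h y. Proof. apply Hh. Qed.
Lemma dual_scal a x : S x -> h (vscal a x) = a * h x. Proof. apply Hh. Qed.

Lemma dual_zero : h vzero = 0.
Proof. rewrite <- (vscal_0 vzero), dual_scal by apply sub_zero. ring. Qed.

Lemma dual_sub x y : S x -> S y -> h (vsub x y) = h x - h y.
Proof. intros. unfold vsub. rewrite dual_add, dual_scal by (auto; apply sub_scal; auto). ring. Qed.

Lemma dual_lincomb (c : nat -> R) (u : nat -> V) n : (forall i, S (u i)) ->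
  h (vsum (fun i => vscal (c i) (u i)) n) = rsum (fun i => c i * h (u i)) n.
Proof.
  intros Hu; induction n; simpl.
  - apply dual_zero.
  - rewrite dual_add, dual_scal by (auto; first [apply sub_lincomb | apply sub_scal]; auto).
    now rewrite IHn.
Qed.

Let unit_values := fun r => exists x, S x /\ N x <= 1 /\ r = Rabs (h x).

Lemma dnorm_lub : is_lub unit_values (dnorm S N h).
Proof.
  apply Rsup_lub.
  - destruct Hh as [_ [_ [C HC]]]. exists (Rabs C). intros r [x [Hx [Hn ->]]].
    eapply Rle_trans; [apply HC; auto|].
    pose proof (norm_nonneg x Hx). pose proof (Rle_abs C). pose proof (Rabs_pos C). nra.
  - exists 0, vzero. split; [apply sub_zero|]. rewrite norm_zero, dual_zero, Rabs_R0. lra.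
Qed.

Lemma dnorm_nonneg : 0 <= dnorm S N h.
Proof.
  destruct dnorm_lub as [H _]. apply H. exists vzero.
  rewrite norm_zero, dual_zero, Rabs_R0. split; [apply sub_zero|split; [lra|reflexivity]].
Qed.

Lemma dnorm_bound x : S x -> Rabs (h x) <= dnorm S N h * N x.
Proof.
  intros Hx. pose proof dnorm_nonneg. pose proof (norm_nonneg x Hx).
  destruct (Req_dec (N x) 0) as [h0|h0].
  - rewrite (norm_eq0 x Hx h0), dual_zero, Rabs_R0, norm_zero. lra.
  - assert (Hpos : 0 < N x) by lra.
    assert (Hunit : unit_values (Rabs (h (vscal (/ N x) x)))).
    { exists (vscal (/ N x) x). split; [apply sub_scal; auto|split; auto].
      rewrite norm_scal by auto. rewrite Rabs_inv, Rabs_pos_eq, Rinv_l; lra. }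
    destruct dnorm_lub as [Hu _]. specialize (Hu _ Hunit).
    rewrite dual_scal, Rabs_mult, Rabs_inv, Rabs_pos_eq in Hu by (auto; lra).
    apply (Rmult_le_reg_r (/ N x)); [apply Rinv_0_lt_compat; auto|].
    rewrite Rmult_assoc, Rinv_r by lra. lra.
Qed.

Lemma dnorm_le C : 0 <= C -> (forall x, S x -> Rabs (h x) <= C * N x) -> dnorm S N h <= C.
Proof.
  intros HC H. destruct dnorm_lub as [_ Hl]. apply Hl. intros r [x [Hx [Hn ->]]].
  eapply Rle_trans; [apply H; auto|]. pose proof (norm_nonneg x Hx). nra.
Qed.

Lemma dual_lipschitz x y : S x -> S y -> Rabs (h x - h y) <= dnorm S N h * N (vsub x y).
Proof. intros. rewrite <- dual_sub by auto. apply dnorm_bound, sub_sub; auto. Qed.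

Lemma dual_cont u x : (forall n, S (u n)) -> S x ->
  conv_in N u x -> Un_cv (fun n => h (u n)) (h x).
Proof.
  intros Hu Hx. apply (lipschitz_cont h (dnorm S N h)); [apply dnorm_nonneg|].
  intros n. apply dual_lipschitz; auto.
Qed.

Lemma dense_bound (D : V -> Prop) M : (forall y, D y -> S y) -> dense_in D S N -> 0 <= M ->
  (forall y, D y -> Rabs (h y) <= M * N y) -> forall x, S x -> Rabs (h x) <= M * N x.
Proof.
  intros DS Hd HM Hb x Hx. apply le_eps; intros eps He.
  pose proof dnorm_nonneg as Dh.
  set (K := dnorm S N h + M). assert (HK : 0 <= K) by (unfold K; lra).
  destruct (Hd x Hx _ (pos_div eps K HK He)) as [y [Hy Hxy]].
  pose proof (dual_lipschitz x y Hx (DS y Hy)) as Hlip. apply Rabs_le_inv in Hlip.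
  pose proof (Hb y Hy) as Hby. apply Rabs_le_inv in Hby.
  pose proof (norm_reverse_triangle y x (DS y Hy) Hx) as Hrev. apply Rabs_le_inv in Hrev.
  rewrite (dist_sym y x) in Hrev by auto.
  pose proof (norm_nonneg _ (sub_sub x y Hx (DS y Hy))).
  assert (K * N (vsub x y) <= K * (eps / (K + 1))) by (apply Rmult_le_compat_l; lra).
  pose proof (small_mul K eps HK He).
  assert (M * N y <= M * (N x + N (vsub x y))) by (apply Rmult_le_compat_l; lra).
  apply Rabs_le. unfold K in *. nra.
Qed.
End OneFunctional.

Lemma dual_eq_on_dense (D : V -> Prop) h1 h2 : (forall y, D y -> S y) -> dense_in D S N ->
  is_dual S N h1 -> is_dual S N h2 -> (forall y, D y -> h1 y = h2 y) ->
  forall x, S x -> h1 x = h2 x.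
Proof.
  intros DS Hd H1 H2 E x Hx.
  assert (Hdiff : is_dual S N (fun z => h1 z + -1 * h2 z)) by (apply dual_plus, dual_mult; auto).
  pose proof (dense_bound Hdiff D 0 DS Hd (Rle_refl 0)) as Hb.
  assert (Hz : Rabs (h1 x + -1 * h2 x) <= 0 * N x).
  { apply Hb; auto. intros y Hy. rewrite E by auto.
    replace (h2 y + -1 * h2 y) with 0 by ring. rewrite Rabs_R0. lra. }
  rewrite Rmult_0_l in Hz. apply Rabs_le_inv in Hz. lra.
Qed.

Lemma dnorm_ext g h : is_dual S N g -> is_dual S N h -> (forall x, S x -> g x = h x) ->
  dnorm S N g = dnorm S N h.
Proof.
  intros Hg Hh E. apply Rle_antisym.
  - apply (dnorm_le Hg); [apply (dnorm_nonneg Hh)|].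
    intros x Hx; rewrite E by auto; apply (dnorm_bound Hh); auto.
  - apply (dnorm_le Hh); [apply (dnorm_nonneg Hg)|].
    intros x Hx; rewrite <- E by auto; apply (dnorm_bound Hg); auto.
Qed.
End Duals.

(** * Extension of bounded functionals from a dense subspace *)

(* McShane-type extension: for an [L]-Lipschitz [phi] on [D], the function
   [x |-> sup_{y in D} (phi y - L * N (y - x))] is an [L]-Lipschitz extension. *)
Definition lip_ext {V : RVS} (D : V -> Prop) (N : V -> R) (L : R) (phi : V -> R) (x : V) : R :=
  Rsup (fun r => exists y, D y /\ r = phi y - L * N (vsub y x)).

Section DenseExtension.
Context {V : RVS} {Hv : vs_axioms V} {S : V -> Prop} {N : V -> R}
  {HS : is_subspace S} {HN : is_norm_on S N}.
Variables (D : V -> Prop) (L : R) (phi : V -> R).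
Hypothesis DS : forall x, D x -> S x.
Hypothesis DSub : is_subspace D.
Hypothesis Hdense : dense_in D S N.
Hypothesis HL : 0 <= L.
Hypothesis phi_add : forall y y', D y -> D y' -> phi (vadd y y') = phi y + phi y'.
Hypothesis phi_scal : forall a y, D y -> phi (vscal a y) = a * phi y.
Hypothesis phi_bound : forall y, D y -> Rabs (phi y) <= L * N y.

Let ext := lip_ext D N L phi.

Lemma phi_lipschitz y y' : D y -> D y' -> Rabs (phi y - phi y') <= L * N (vsub y y').
Proof.
  intros Hy Hy'. replace (phi y - phi y') with (phi (vsub y y')).
  - apply phi_bound, (sub_sub (S := D)); auto.
  - unfold vsub. rewrite phi_add, phi_scal by (auto; apply (sub_scal (S := D)); auto). ring.
Qed.

Lemma L_mono a b : a <= b -> L * a <= L * b.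
Proof. intros; apply Rmult_le_compat_l; auto. Qed.

Lemma lip_ext_spec x : S x -> forall y, D y -> Rabs (phi y - ext x) <= L * N (vsub y x).
Proof.
  intros Hx y Hy. assert (D0 : D vzero) by apply DSub.
  assert (Hbound : forall y', D y' -> phi y' - L * N (vsub y' x) <= phi y + L * N (vsub y x)).
  { intros y' Hy'. pose proof (phi_lipschitz y' y Hy' Hy) as Hl. apply Rabs_le_inv in Hl.
    pose proof (dist_triangle y' x y (DS _ Hy') Hx (DS _ Hy)) as Ht.
    rewrite (dist_sym x y) in Ht by auto. apply L_mono in Ht. lra. }
  apply Rabs_le. split.
  - assert (ext x <= phi y + L * N (vsub y x)); [|lra].
    apply Rsup_le; [exists (phi vzero - L * N (vsub vzero x)), vzero; auto|].
    intros r [y' [Hy' ->]]. auto.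
  - assert (phi y - L * N (vsub y x) <= ext x); [|lra].
    apply Rsup_ub; [|exists y; auto].
    exists (phi y + L * N (vsub y x)). intros r [y' [Hy' ->]]. auto.
Qed.

Lemma lip_ext_onD y0 : D y0 -> ext y0 = phi y0.
Proof.
  intros H. pose proof (lip_ext_spec y0 (DS _ H) y0 H) as Hs.
  rewrite vsub_diag, norm_zero in Hs. apply Rabs_le_inv in Hs. lra.
Qed.

Lemma approx x eps : S x -> 0 < eps -> exists y, D y /\ N (vsub y x) < eps.
Proof.
  intros Hx He. destruct (Hdense x Hx eps He) as [y [Hy Hn]]. exists y; split; auto.
  rewrite (dist_sym y x) by auto. auto.
Qed.

Lemma lip_ext_bound x : S x -> Rabs (ext x) <= L * N x.
Proof.
  intros Hx. apply le_eps; intros eps He.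
  destruct (approx x (eps / (2 * L + 1)) Hx (pos_div eps (2 * L) ltac:(lra) He)) as [y [Hy Hn]].
  pose proof (lip_ext_spec x Hx y Hy) as Hs. apply Rabs_le_inv in Hs.
  pose proof (phi_bound y Hy) as Hb. apply Rabs_le_inv in Hb.
  pose proof (norm_reverse_triangle y x (DS _ Hy) Hx) as Hr. apply Rabs_le_inv in Hr.
  assert (L * N y <= L * (N x + N (vsub y x))) by (apply L_mono; lra).
  pose proof (small_mul (2 * L) eps ltac:(lra) He).
  assert (2 * L * N (vsub y x) <= 2 * L * (eps / (2 * L + 1))) by (apply Rmult_le_compat_l; lra).
  apply Rabs_le. nra.
Qed.

Lemma lip_ext_add x x' : S x -> S x' -> ext (vadd x x') = ext x + ext x'.
Proof.
  intros Hx Hx'. apply eq_eps; intros eps He.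
  assert (Hpos : 0 < eps / (4 * L + 1)) by (apply pos_div; lra).
  destruct (approx x _ Hx Hpos) as [y [Hy Hn]].
  destruct (approx x' _ Hx' Hpos) as [y' [Hy' Hn']].
  assert (Dyy : D (vadd y y')) by (apply DSub; auto).
  pose proof (lip_ext_spec _ (sub_add _ _ Hx Hx') _ Dyy) as Hs.
  rewrite phi_add, vsub_vadd in Hs by auto.
  pose proof (norm_triangle (vsub y x) (vsub y' x')
                (sub_sub _ _ (DS _ Hy) Hx) (sub_sub _ _ (DS _ Hy') Hx')) as Ht.
  apply L_mono in Ht.
  pose proof (lip_ext_spec x Hx y Hy). pose proof (lip_ext_spec x' Hx' y' Hy').
  pose proof (small_mul (4 * L) eps ltac:(lra) He).
  assert (4 * L * (N (vsub y x) + N (vsub y' x')) <= 4 * L * (2 * (eps / (4 * L + 1))))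
    by (apply Rmult_le_compat_l; lra).
  apply Rabs_le_inv in Hs; apply Rabs_le_inv in H; apply Rabs_le_inv in H0. apply Rabs_le. lra.
Qed.

Lemma lip_ext_scal a x : S x -> ext (vscal a x) = a * ext x.
Proof.
  intros Hx. apply eq_eps; intros eps He. pose proof (Rabs_pos a) as Ha.
  set (k := 2 * Rabs a * L). assert (Hk : 0 <= k) by (unfold k; nra).
  destruct (approx x _ Hx (pos_div eps k Hk He)) as [y [Hy Hn]].
  assert (Day : D (vscal a y)) by (apply DSub; auto).
  pose proof (lip_ext_spec _ (sub_scal a x Hx) _ Day) as Hs.
  rewrite phi_scal, <- vscal_sub, (norm_scal (N := N)) in Hs by (auto; apply sub_sub; auto).
  pose proof (lip_ext_spec x Hx y Hy) as Hs'.
  assert (Hmul : Rabs (a * phi y - a * ext x) <= Rabs a * (L * N (vsub y x))).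
  { replace (a * phi y - a * ext x) with (a * (phi y - ext x)) by ring.
    rewrite Rabs_mult. apply Rmult_le_compat_l; auto. }
  pose proof (small_mul k eps Hk He).
  assert (k * N (vsub y x) <= k * (eps / (k + 1))) by (apply Rmult_le_compat_l; lra).
  apply Rabs_le_inv in Hs; apply Rabs_le_inv in Hmul. apply Rabs_le. unfold k in *. nra.
Qed.
End DenseExtension.

Lemma dense_extension {V : RVS} {Hv : vs_axioms V} {S : V -> Prop} {N : V -> R}
  {HS : is_subspace S} {HN : is_norm_on S N} (D : V -> Prop) (L : R) (phi : V -> R) :
  (forall x, D x -> S x) -> is_subspace D -> dense_in D S N -> 0 <= L ->
  (forall y y', D y -> D y' -> phi (vadd y y') = phi y + phi y') ->
  (forall a y, D y -> phi (vscal a y) = a * phi y) ->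
  (forall y, D y -> Rabs (phi y) <= L * N y) ->
  exists h, is_dual S N h /\ (forall y, D y -> h y = phi y) /\
            (forall x, S x -> Rabs (h x) <= L * N x).
Proof.
  intros DS DSub Hd HL Ha Hs Hb. exists (lip_ext D N L phi). split; [|split].
  - split; [|split].
    + intros; apply lip_ext_add; auto.
    + intros; apply lip_ext_scal; auto.
    + exists L. intros; apply lip_ext_bound; auto.
  - intros; apply lip_ext_onD; auto.
  - intros; apply lip_ext_bound; auto.
Qed.

(** * The Hahn-Banach theorem for separable normed spaces *)

Record partial_fun (V : RVS) := { pdom : V -> Prop; pval : V -> R }.
Arguments pdom {V}. Arguments pval {V}.

Section HahnBanach.
Context {V : RVS} {Hv : vs_axioms V} {S : V -> Prop} {N : V -> R}
  {HS : is_subspace S} {HN : is_norm_on S N}.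

Definition dominated (p : partial_fun V) : Prop :=
  (forall z, pdom p z -> S z) /\ is_subspace (pdom p) /\
  (forall x y, pdom p x -> pdom p y -> pval p (vadd x y) = pval p x + pval p y) /\
  (forall a x, pdom p x -> pval p (vscal a x) = a * pval p x) /\
  (forall z, pdom p z -> pval p z <= N z).

Definition extends (p q : partial_fun V) : Prop :=
  forall z, pdom p z -> pdom q z /\ pval q z = pval p z.

Lemma extends_trans p q r : extends p q -> extends q r -> extends p r.
Proof. intros Hpq Hqr z Hz. destruct (Hpq z Hz) as [Hq Eq]. destruct (Hqr z Hq). split; congruence. Qed.

Lemma dominated_abs p z : dominated p -> pdom p z -> Rabs (pval p z) <= N z.
Proof.
  intros [MS [HM [_ [Hs Hb]]]] Hz. apply Rabs_le. split.
  - assert (Hopp : pdom p (vscal (-1) z)) by (apply HM; auto).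
    pose proof (Hb _ Hopp) as H. rewrite Hs, norm_opp in H by auto. lra.
  - apply Hb; auto.
Qed.

Lemma vscal_sub_l t t' (v : V) : vsub (vscal t v) (vscal t' v) = vscal (t - t') v.
Proof. unfold vsub, Rminus. rewrite vscal_mul, vscal_adds. do 2 f_equal. ring. Qed.

(* The starting point: the functional [t v |-> t * N v] on the line through [v]. *)
Section Line.
Variable v : V.
Hypothesis Sv : S v.

Definition line_fun : partial_fun V :=
  {| pdom := fun z => exists t, z = vscal t v;
     pval := fun z => epsilon (inhabits 0) (fun r => exists t, z = vscal t v /\ r = t * N v) |}.

Lemma line_fun_val t : pval line_fun (vscal t v) = t * N v.
Proof.
  simpl. match goal with |- epsilon ?i ?P = _ => assert (H : P (epsilon i P)) end.
  { apply epsilon_spec. eauto. }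
  destruct H as [t' [E ->]].
  assert (Hz : Rabs (t - t') * N v = 0).
  { rewrite <- norm_scal, <- vscal_sub_l, <- E, vsub_diag by auto. apply norm_zero. }
  destruct (Rmult_integral _ _ Hz) as [Ht|Hn].
  - destruct (Req_dec (t - t') 0) as [E0|E0]; [replace t' with t by lra; reflexivity|].
    exfalso. exact (Rabs_no_R0 _ E0 Ht).
  - rewrite Hn. ring.
Qed.

Lemma line_fun_dominated : dominated line_fun.
Proof.
  split; [|split; [|split; [|split]]]; simpl pdom.
  - intros z [t ->]. apply sub_scal; auto.
  - split; [|split].
    + exists 0. symmetry; apply vscal_0.
    + intros x y [t ->] [t' ->]. exists (t + t'). symmetry; apply vscal_adds.
    + intros a x [t ->]. exists (a * t). apply vscal_mul.
  - intros x y [t ->] [t' ->]. rewrite <- vscal_adds, !line_fun_val. ring.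
  - intros a x [t ->]. rewrite vscal_mul, !line_fun_val. ring.
  - intros z [t ->]. rewrite line_fun_val, norm_scal by auto.
    apply Rmult_le_compat_r; [apply norm_nonneg; auto|apply Rle_abs].
Qed.

Lemma line_fun_at_v : pdom line_fun v /\ pval line_fun v = N v.
Proof.
  assert (E : v = vscal 1 v) by (symmetry; apply vscal_1).
  split; [exists 1; auto|]. rewrite E at 1. rewrite line_fun_val. ring.
Qed.
End Line.

(* The one-dimensional extension step: [p] is extended to [M + R y] by giving
   [y] the value [sup_{m in M} (p m - N (m - y))]. *)
Section OneStep.
Variables (p : partial_fun V) (y : V).
Hypothesis Hp : dominated p.
Hypothesis Sy : S y.
Hypothesis not_in : ~ pdom p y.

Definition step_value : R := Rsup (fun r => exists m, pdom p m /\ r = pval p m - N (vsub m y)).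

Definition step_fun : partial_fun V :=
  {| pdom := fun z => exists m t, pdom p m /\ z = vadd m (vscal t y);
     pval := fun z => epsilon (inhabits 0)
       (fun r => exists m t, pdom p m /\ z = vadd m (vscal t y) /\ r = pval p m + t * step_value) |}.

Lemma step_value_range m : pdom p m ->
  pval p m - N (vsub m y) <= step_value /\ step_value <= N (vadd m y) - pval p m.
Proof.
  destruct Hp as [MS [HM [Ha [Hs Hb]]]]. intros Hm.
  assert (Hne : exists r, exists m, pdom p m /\ r = pval p m - N (vsub m y)).
  { eexists; exists vzero; split; eauto. apply HM. }
  split.
  - apply Rsup_ub; eauto. exists (N y). intros r [m1 [Hm1 ->]].
    pose proof (Hb m1 Hm1). assert (N m1 <= N (vsub m1 y) + N y).
    { rewrite <- (vsub_add m1 y) at 1. apply norm_triangle; auto. apply sub_sub; auto. }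
    lra.
  - apply Rsup_le; auto. intros r [m1 [Hm1 ->]].
    assert (HMm : pdom p (vadd m1 m)) by (apply HM; auto).
    pose proof (Hb _ HMm) as H. rewrite Ha in H by auto.
    assert (E : vadd m1 m = vadd (vsub m1 y) (vadd m y)).
    { unfold vsub. rewrite vadd_swap, vadd_oppl, vadd_0r. auto. }
    rewrite E in H.
    pose proof (norm_triangle (vsub m1 y) (vadd m y) (sub_sub _ _ (MS _ Hm1) Sy)
                  (sub_add _ _ (MS _ Hm) Sy)).
    lra.
Qed.

(* Since [y] is not in the domain, the decomposition [m + t y] is unique. *)
Lemma decomposition_unique m m' t t' : pdom p m -> pdom p m' ->
  vadd m (vscal t y) = vadd m' (vscal t' y) -> t = t' /\ m = m'.
Proof.
  destruct Hp as [_ [HM _]]. intros Hm Hm' E.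
  assert (Et : t = t').
  { apply NNPP. intros Hneq. apply not_in.
    assert (E3 : vscal (t - t') y = vsub m' m).
    { apply (vadd_cancel (vsub m m')).
      rewrite <- vsub_chain, vsub_diag, <- vscal_sub_l, <- vsub_vadd, E. apply vsub_diag. }
    replace y with (vscal (/ (t - t')) (vsub m' m)).
    - apply (sub_scal (S := pdom p)), (sub_sub (S := pdom p)); auto.
    - rewrite <- E3, vscal_mul, Rinv_l, vscal_1 by lra. auto. }
  subst t'. split; auto. rewrite (vadd_comm m), (vadd_comm m') in E. apply vadd_cancel in E. auto.
Qed.

Lemma step_fun_val m t : pdom p m -> pval step_fun (vadd m (vscal t y)) = pval p m + t * step_value.
Proof.
  intros Hm. simpl. match goal with |- epsilon ?i ?P = _ => assert (H : P (epsilon i P)) end.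
  { apply epsilon_spec. eauto 6. }
  destruct H as [m' [t' [Hm' [E ->]]]].
  destruct (decomposition_unique m m' t t' Hm Hm' E). subst. auto.
Qed.

(* Domination on [M + R y]: rescale to [m' +/- y] and use [step_value_range]. *)
Lemma step_fun_le m t : pdom p m ->
  pval p m + t * step_value <= N (vadd m (vscal t y)).
Proof.
  pose proof Hp as [MS [HM [Ha [Hs Hb]]]]. intros Hm.
  destruct (Rtotal_order t 0) as [Ht|[Ht|Ht]].
  - set (u := - t). assert (Hu : 0 < u) by (unfold u; lra).
    set (m' := vscal (/ u) m). assert (Hm' : pdom p m') by (apply HM; auto).
    destruct (step_value_range m' Hm') as [H1 _].
    assert (Em : vscal u m' = m) by (unfold m'; rewrite vscal_mul, Rinv_r, vscal_1 by lra; auto).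
    assert (Phm : u * pval p m' = pval p m) by (rewrite <- Hs, Em; auto).
    assert (En : u * N (vsub m' y) = N (vadd m (vscal t y))).
    { rewrite <- (Rabs_pos_eq u), <- norm_scal by (try apply sub_sub; auto; lra).
      rewrite vscal_sub, Em. unfold vsub. rewrite vscal_mul. do 3 f_equal. unfold u; ring. }
    assert (u * (pval p m' - N (vsub m' y)) <= u * step_value) by (apply Rmult_le_compat_l; lra).
    unfold u in *. nra.
  - subst t. rewrite vscal_0, vadd_0r, Rmult_0_l, Rplus_0_r. auto.
  - set (m' := vscal (/ t) m). assert (Hm' : pdom p m') by (apply HM; auto).
    destruct (step_value_range m' Hm') as [_ H1].
    assert (Em : vscal t m' = m) by (unfold m'; rewrite vscal_mul, Rinv_r, vscal_1 by lra; auto).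
    assert (Phm : t * pval p m' = pval p m) by (rewrite <- Hs, Em; auto).
    assert (En : t * N (vadd m' y) = N (vadd m (vscal t y))).
    { rewrite <- (Rabs_pos_eq t) at 1 by lra. rewrite <- norm_scal by (apply sub_add; auto).
      rewrite vscal_addv, Em. auto. }
    assert (t * step_value <= t * (N (vadd m' y) - pval p m')) by (apply Rmult_le_compat_l; lra).
    nra.
Qed.

Lemma step_fun_dominated : dominated step_fun.
Proof.
  pose proof Hp as [MS [HM [Ha [Hs Hb]]]].
  split; [|split; [|split; [|split]]]; simpl pdom.
  - intros z [m [t [Hm ->]]]. apply sub_add; auto. apply sub_scal; auto.
  - split; [|split].
    + exists vzero, 0. split; [apply HM|]. rewrite vscal_0, vadd_0l; auto.
    + intros x z [m [t [Hm ->]]] [m' [t' [Hm' ->]]]. exists (vadd m m'), (t + t').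
      split; [apply HM; auto|]. rewrite vadd_swap, vscal_adds. auto.
    + intros a x [m [t [Hm ->]]]. exists (vscal a m), (a * t). split; [apply HM; auto|].
      rewrite vscal_addv, vscal_mul. auto.
  - intros x z [m [t [Hm ->]]] [m' [t' [Hm' ->]]].
    rewrite vadd_swap, <- vscal_adds, !step_fun_val by (auto; apply HM; auto).
    rewrite Ha by auto. ring.
  - intros a x [m [t [Hm ->]]]. rewrite vscal_addv, vscal_mul, !step_fun_val by (auto; apply HM; auto).
    rewrite Hs by auto. ring.
  - intros z [m [t [Hm ->]]]. rewrite step_fun_val by auto. apply step_fun_le; auto.
Qed.

Lemma step_fun_extends : extends p step_fun.
Proof.
  intros z Hz. assert (E : z = vadd z (vscal 0 y)) by (rewrite vscal_0, vadd_0r; auto).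
  split; [exists z, 0; auto|]. rewrite E at 1. rewrite step_fun_val by auto. ring.
Qed.

Lemma step_fun_contains : pdom step_fun y.
Proof. exists vzero, 1. split; [apply Hp|]. rewrite vscal_1, vadd_0l; auto. Qed.
End OneStep.

Lemma one_step_extension p y : dominated p -> S y ->
  exists q, dominated q /\ extends p q /\ pdom q y.
Proof.
  intros Hp Sy. destruct (classic (pdom p y)) as [Hin|Hout].
  - exists p. split; [auto|split; [intros z Hz; auto|auto]].
  - exists (step_fun p y). split; [apply step_fun_dominated; auto|].
    split; [apply step_fun_extends; auto|apply step_fun_contains; auto].
Qed.

(* Iterating the step along a dense sequence [d] gives an increasing chain. *)
Section Chain.
Variables (v : V) (d : nat -> V).
Hypothesis Sv : S v.
Hypothesis Sd : forall n, S (d n).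

Definition next (p : partial_fun V) (y : V) : partial_fun V :=
  epsilon (inhabits p) (fun q => dominated q /\ extends p q /\ pdom q y).

Fixpoint chain (n : nat) : partial_fun V :=
  match n with O => line_fun v | Datatypes.S k => next (chain k) (d k) end.

Lemma chain_step n : dominated (chain n) /\
  (dominated (chain (Datatypes.S n)) /\ extends (chain n) (chain (Datatypes.S n)) /\
   pdom (chain (Datatypes.S n)) (d n)).
Proof.
  induction n as [|n IH].
  - assert (H0 : dominated (chain 0)) by (apply line_fun_dominated; auto).
    split; auto. cbn [chain]. unfold next. apply epsilon_spec, one_step_extension; auto.
  - destruct IH as [_ [IH _]]. split; auto.
    cbn [chain]. unfold next. apply epsilon_spec, one_step_extension; auto.
Qed.

Lemma chain_dominated n : dominated (chain n). Proof. apply chain_step. Qed.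

Lemma chain_mono n m : (n <= m)%nat -> extends (chain n) (chain m).
Proof.
  induction 1.
  - intros z Hz; auto.
  - eapply extends_trans; eauto. apply chain_step.
Qed.

Definition chain_union : partial_fun V :=
  {| pdom := fun z => exists n, pdom (chain n) z;
     pval := fun z => pval (chain (epsilon (inhabits 0%nat) (fun n => pdom (chain n) z))) z |}.

Lemma chain_union_val n z : pdom (chain n) z -> pval chain_union z = pval (chain n) z.
Proof.
  intros H. simpl. set (k := epsilon _ _).
  assert (Hk : pdom (chain k) z) by (apply epsilon_spec; eauto).
  destruct (chain_mono k (max k n) (Nat.le_max_l _ _) z Hk).
  destruct (chain_mono n (max k n) (Nat.le_max_r _ _) z H). congruence.
Qed.

Lemma chain_union_common x y : pdom chain_union x -> pdom chain_union y ->
  exists n, pdom (chain n) x /\ pdom (chain n) y.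
Proof.
  intros [n Hn] [m Hm]. exists (max n m). split.
  - apply (chain_mono n); auto; lia.
  - apply (chain_mono m); auto; lia.
Qed.

Lemma chain_union_dominated : dominated chain_union.
Proof.
  split; [|split; [|split; [|split]]].
  - intros z [n Hn]. apply (chain_dominated n); auto.
  - split; [|split].
    + exists 0%nat. apply (chain_dominated 0).
    + intros x y Hx Hy. destruct (chain_union_common x y Hx Hy) as [n [H1 H2]].
      exists n. apply (chain_dominated n); auto.
    + intros a x [n Hn]. exists n. apply (chain_dominated n); auto.
  - intros x y Hx Hy. destruct (chain_union_common x y Hx Hy) as [n [H1 H2]].
    destruct (chain_dominated n) as [_ [HM [Ha _]]].
    rewrite !(chain_union_val n) by (auto; apply HM; auto). apply Ha; auto.
  - intros a x [n Hx]. destruct (chain_dominated n) as [_ [HM [_ [Hs _]]]].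
    rewrite !(chain_union_val n) by (auto; apply HM; auto). apply Hs; auto.
  - intros z [n Hz]. rewrite (chain_union_val n) by auto. apply (chain_dominated n); auto.
Qed.
End Chain.

Theorem hahn_banach_separable : separable_in S N -> forall v, S v ->
  exists h, is_dual S N h /\ (forall x, S x -> Rabs (h x) <= N x) /\ h v = N v.
Proof.
  intros [d [Sd Hd]] v Sv.
  set (p := chain_union v d).
  destruct (chain_union_dominated v d Sv Sd) as [DS [DSub [Ha [Hs _]]]].
  assert (Hdense : dense_in (pdom p) S N).
  { intros x Hx eps He. destruct (Hd x Hx eps He) as [n Hn]. exists (d n). split; auto.
    exists (Datatypes.S n). apply (chain_step v d Sv Sd n). }
  destruct (dense_extension (pdom p) 1 (pval p) DS DSub Hdense ltac:(lra) Ha Hs)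
    as [h [Hh [Eh Bh]]].
  { intros y Hy. rewrite Rmult_1_l. apply dominated_abs; auto.
    apply chain_union_dominated; auto. }
  exists h. split; [auto|split].
  - intros x Hx. rewrite <- (Rmult_1_l (N x)). auto.
  - destruct (line_fun_at_v v Sv) as [Hv0 Ev].
    assert (Dv : pdom p v) by (exists 0%nat; auto).
    rewrite Eh by auto. unfold p. rewrite (chain_union_val v d Sv Sd 0%nat) by auto. auto.
Qed.
End HahnBanach.

(** * Sequence spaces with a Schauder basis *)

#[export] Instance seq_vs : vs_axioms seqVS.
Proof. repeat split; intros; apply functional_extensionality; intros; simpl; ring. Qed.

Definition basis_sum (c : Rseq) (n : nat) : seqVS := vsum (fun i => vscal (c i) (e i)) n.

Lemma basis_sum_coord c n j : basis_sum c n j = if Nat.ltb j n then c j else 0.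
Proof.
  unfold basis_sum. induction n as [|n IH]; [reflexivity|].
  change (vsum (fun i => vscal (c i) (e i)) n j + c n * e n j
          = (if Nat.ltb j (Datatypes.S n) then c j else 0)).
  rewrite IH. unfold e.
  destruct (Nat.ltb_spec j n); destruct (Nat.ltb_spec j (Datatypes.S n));
    destruct (Nat.eqb_spec n j); try lia; subst; ring.
Qed.

Lemma vsub_coord (x y : seqVS) j : vsub x y j = x j - y j.
Proof. unfold vsub. simpl. ring. Qed.

Section CBSpace.
Variables (Th : seqVS -> Prop) (TN : seqVS -> R).
Hypothesis HC : CB Th TN.

#[local] Instance CB_subspace : is_subspace Th. Proof. apply HC. Qed.
#[local] Instance CB_normed : is_norm_on Th TN. Proof. apply HC. Qed.

Lemma CB_unit i : Th (e i). Proof. apply HC. Qed.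

Lemma basis_sum_in c n : Th (basis_sum c n).
Proof. apply sub_lincomb, CB_unit. Qed.

(* Every element of a CB-space is the sum of its own coordinates along the
   basis: the Schauder coefficients coincide with the coordinates, because
   coordinate functionals are continuous. *)
Lemma CB_expansion c : Th c -> conv_in TN (basis_sum c) c.
Proof.
  intros Hc. destruct HC as [[_ Hcoord] [_ Hbasis]]. destruct (Hbasis c Hc) as [a [Ha _]].
  replace c with a at 1; [exact Ha|].
  apply functional_extensionality. intros j. destruct (Hcoord j) as [C HCj].
  apply (UL_sequence (fun n => basis_sum a n j)).
  - intros eps He. exists (Datatypes.S j). intros n Hn. unfold Rdist.
    rewrite basis_sum_coord. destruct (Nat.ltb_spec j n); [|lia].
    rewrite Rminus_diag, Rabs_R0. lra.
  - apply (lipschitz_cont (N := TN) (fun x : seqVS => x j) (Rabs C)); [apply Rabs_pos| |exact Ha].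
    intros n. rewrite <- vsub_coord. eapply Rle_trans; [apply HCj, sub_sub; auto; apply basis_sum_in|].
    apply Rmult_le_compat_r; [apply norm_nonneg, sub_sub; auto; apply basis_sum_in|apply Rle_abs].
Qed.

Lemma dual_basis_sum g c n : is_dual Th TN g ->
  g (basis_sum c n) = rsum (fun i => c i * g (e i)) n.
Proof. intros Hg. apply (dual_lincomb Hg). apply CB_unit. Qed.

Lemma CB_dual_unique g h : is_dual Th TN g -> is_dual Th TN h ->
  (forall i, g (e i) = h (e i)) -> forall c, Th c -> g c = h c.
Proof.
  intros Hg Hh Ei c Hc.
  assert (E : (fun n => g (basis_sum c n)) = (fun n => h (basis_sum c n))).
  { apply functional_extensionality. intros n. rewrite !dual_basis_sum by auto.
    apply rsum_ext. intros i. rewrite Ei. auto. }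
  apply (UL_sequence (fun n => g (basis_sum c n))).
  - apply (dual_cont Hg); auto using basis_sum_in, CB_expansion.
  - rewrite E. apply (dual_cont Hh); auto using basis_sum_in, CB_expansion.
Qed.

Lemma dualseq_norm_eq h d : is_dual Th TN h -> (forall i, h (e i) = d i) ->
  dualseq_norm Th TN d = dnorm Th TN h.
Proof.
  intros Hh Ed. unfold dualseq_norm. apply Rsup_eq. split.
  - intros r [g [Hg [Eg ->]]]. right. apply dnorm_ext; auto. apply CB_dual_unique; auto.
    intros i; rewrite Eg, Ed; auto.
  - intros b Hb. apply Hb. exists h. auto.
Qed.
End CBSpace.

Section FSequence.
Context {V : RVS} {Hv : vs_axioms V} (Y : nat -> V -> Prop) (NN : nat -> V -> R).
Hypothesis HF : Fseq Y NN.

Lemma F_subspace s : is_subspace (Y s). Proof. apply HF. Qed.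
Lemma F_normed s : is_norm_on (Y s) (NN s). Proof. apply HF. Qed.
Lemma F_complete s : complete_in (Y s) (NN s). Proof. apply HF. Qed.
Lemma F_separable s : separable_in (Y s) (NN s). Proof. apply HF. Qed.

Lemma F_inter_subspace : is_subspace (interF Y).
Proof.
  split; [|split].
  - intros s. apply (F_subspace s).
  - intros x y Hx Hy s. apply (F_subspace s); auto.
  - intros a x Hx s. apply (F_subspace s); auto.
Qed.

Lemma F_dense s : dense_in (interF Y) (Y s) (NN s).
Proof. destruct HF as [_ [_ [_ [_ H]]]]. intros x Hx eps He. apply H; auto. Qed.

Lemma F_embed0 s x : Y s x -> Y 0%nat x /\ NN 0%nat x <= NN s x.
Proof.
  destruct HF as [_ [_ [H1 [H2 _]]]]. induction s as [|s IH]; intros H.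
  - split; auto; lra.
  - destruct (IH (H1 _ _ H)). split; auto. pose proof (H2 _ _ H). lra.
Qed.
End FSequence.

Section Frames.
Context {V : RVS} {Hv : vs_axioms V} (X : nat -> V -> Prop) (N : nat -> V -> R)
  (Th : nat -> seqVS -> Prop) (TN : nat -> seqVS -> R) (g : nat -> V -> R).
Hypothesis HX : Fseq X N.
Hypothesis HC : forall s, CB (Th s) (TN s).
Hypothesis HT : Fseq Th TN.
Hypothesis HB : F_Bessel X N Th TN g.

#[local] Instance X_subspace s : is_subspace (X s) := F_subspace X N HX s.
#[local] Instance X_normed s : is_norm_on (X s) (N s) := F_normed X N HX s.
#[local] Instance XF_subspace : is_subspace (interF X) := F_inter_subspace X N HX.
#[local] Instance Th_subspace s : is_subspace (Th s) := F_subspace Th TN HT s.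
#[local] Instance Th_normed s : is_norm_on (Th s) (TN s) := F_normed Th TN HT s.
#[local] Instance ThF_subspace : is_subspace (interF Th) := F_inter_subspace Th TN HT.

Definition analysis (x : V) : seqVS := fun i => g i x.

Lemma analysis_in x : interF X x -> interF Th (analysis x).
Proof. apply HB. Qed.

Lemma analysis_bound s : exists B, 0 <= B /\
  forall x, interF X x -> TN s (analysis x) <= B * N s x.
Proof.
  destruct HB as [_ [_ H]]. destruct (H s) as [B HB']. exists (Rabs B). split; [apply Rabs_pos|].
  intros x Hx. eapply Rle_trans; [apply HB'; auto|].
  apply Rmult_le_compat_r; [apply norm_nonneg, Hx|apply Rle_abs].
Qed.

Lemma analysis_add x y : interF X x -> interF X y ->
  analysis (vadd x y) = vadd (analysis x) (analysis y).
Proof. intros Hx Hy. apply functional_extensionality; intros i. apply (proj1 HB i); auto. Qed.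

Lemma analysis_scal a x : interF X x -> analysis (vscal a x) = vscal a (analysis x).
Proof. intros Hx. apply functional_extensionality; intros i. apply (proj1 HB i); auto. Qed.

Lemma basis_sum_F c n : interF Th (basis_sum c n).
Proof. intros s. apply (basis_sum_in _ _ (HC s)). Qed.

Lemma unit_F i : interF Th (e i).
Proof. intros s. apply (CB_unit _ _ (HC s)). Qed.

(** ** Part (a), "if": an F-frame yields a reconstructing DF-Bessel sequence *)

Section FromFFrame.
Variable W : seqVS -> V.
Hypothesis HW : F_bounded_op X N Th TN W.
Hypothesis W_rec : forall x, interF X x -> W (analysis x) = x.

Lemma W_add c d : interF Th c -> interF Th d -> W (vadd c d) = vadd (W c) (W d).
Proof. apply HW. Qed.
Lemma W_scal a c : interF Th c -> W (vscal a c) = vscal a (W c).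
Proof. apply HW. Qed.
Lemma W_in c : interF Th c -> interF X (W c).
Proof. apply HW. Qed.

Lemma W_sub c d : interF Th c -> interF Th d -> W (vsub c d) = vsub (W c) (W d).
Proof. intros Hc Hd. unfold vsub. rewrite W_add, W_scal; auto. apply sub_scal; auto. Qed.

Lemma W_basis_sum c n : W (basis_sum c n) = vsum (fun i => vscal (c i) (W (e i))) n.
Proof.
  induction n as [|n IH].
  - change (W vzero = vzero). rewrite <- (vscal_0 vzero) at 1.
    rewrite W_scal by apply sub_zero. apply vscal_0.
  - unfold basis_sum in *. cbn [vsum].
    rewrite W_add, IH, W_scal by (apply basis_sum_F || apply unit_F || (apply sub_scal; apply unit_F)).
    auto.
Qed.

Lemma W_bound s : exists K, 0 <= K /\ forall c, interF Th c -> N s (W c) <= K * TN s c.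
Proof.
  destruct HW as [_ [_ [_ Hb]]]. destruct (Hb s) as [K HK]. exists (Rabs K).
  split; [apply Rabs_pos|]. intros c Hc. eapply Rle_trans; [apply HK; auto|].
  apply Rmult_le_compat_r; [apply norm_nonneg, Hc|apply Rle_abs].
Qed.

(* Every [h] in [X_s^*] pulls back along [W] to an element of [Theta_s^*]
   (extended from the dense part [Theta_F]) with values [h (f_i)] on the basis. *)
Lemma W_pullback s K h : 0 <= K -> (forall c, interF Th c -> N s (W c) <= K * TN s c) ->
  is_dual (X s) (N s) h ->
  exists h', is_dual (Th s) (TN s) h' /\ (forall i, h' (e i) = h (W (e i))) /\
             dnorm (Th s) (TN s) h' <= K * dnorm (X s) (N s) h.
Proof.
  intros HK HWK Hh. pose proof (dnorm_nonneg Hh) as Dh.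
  assert (Hb : forall c, interF Th c -> Rabs (h (W c)) <= (dnorm (X s) (N s) h * K) * TN s c).
  { intros c Hc. eapply Rle_trans; [apply (dnorm_bound Hh), W_in; auto|].
    rewrite Rmult_assoc. apply Rmult_le_compat_l; auto. }
  destruct (dense_extension (S := Th s) (interF Th) (dnorm (X s) (N s) h * K) (fun c => h (W c)))
    as [h' [Hh' [Eh' Bh']]].
  - intros c Hc; apply Hc.
  - apply ThF_subspace.
  - apply F_dense; auto.
  - apply Rmult_le_pos; auto.
  - intros. rewrite W_add by auto. apply (dual_add Hh); apply W_in; auto.
  - intros. rewrite W_scal by auto. apply (dual_scal Hh); apply W_in; auto.
  - exact Hb.
  - exists h'. split; [auto|split].
    + intros i. apply Eh', unit_F.
    + replace (K * dnorm (X s) (N s) h) with (dnorm (X s) (N s) h * K) by ring.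
      apply (dnorm_le Hh'); [apply Rmult_le_pos; auto|exact Bh'].
Qed.

Lemma F_frame_DF_Bessel : DF_Bessel X N Th TN (fun i => W (e i)).
Proof.
  split; [intros i; apply W_in, unit_F|]. intros s. destruct (W_bound s) as [K [HK HWK]].
  split.
  - intros h Hh. destruct (W_pullback s K h HK HWK Hh) as [h' [Hh' [Eh' _]]]. exists h'; auto.
  - exists K. intros h Hh. destruct (W_pullback s K h HK HWK Hh) as [h' [Hh' [Eh' Bh']]].
    rewrite (dualseq_norm_eq _ _ (HC s) h') by auto. auto.
Qed.

(* Reconstruction: the partial sums are [W] applied to the partial basis
   expansions of [analysis x], which converge to [analysis x]. *)
Lemma F_frame_reconstructs : reconstructs X N g (fun i => W (e i)).
Proof.
  intros x Hx s eps Heps. destruct (W_bound s) as [K [HK HWK]].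
  assert (HUx : interF Th (analysis x)) by (apply analysis_in; auto).
  destruct (CB_expansion _ _ (HC s) (analysis x) (HUx s) _ (pos_div _ _ HK Heps)) as [n0 Hn0].
  exists n0. intros n Hn. specialize (Hn0 n Hn).
  change (fun i => vscal (g i x) (W (e i))) with (fun i => vscal (analysis x i) (W (e i))).
  rewrite <- W_basis_sum. rewrite <- (W_rec x Hx) at 2.
  rewrite <- W_sub by (auto; apply basis_sum_F).
  eapply Rle_lt_trans; [apply HWK, sub_sub; auto; apply basis_sum_F|].
  eapply Rle_lt_trans; [|apply (small_mul K eps HK Heps)].
  apply Rmult_le_compat_l; auto. left; exact Hn0.
Qed.
End FromFFrame.

(** ** Part (a), "only if": a reconstructing DF-Bessel sequence gives an F-frame *)

Section FromDFBessel.
Variable f : nat -> V.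
Hypothesis HDF : DF_Bessel X N Th TN f.
Hypothesis Hrec : reconstructs X N g f.

Definition frame_sum (c : Rseq) (n : nat) : V := vsum (fun i => vscal (c i) (f i)) n.

Lemma frame_in s i : X s (f i). Proof. apply HDF. Qed.

Lemma frame_sum_in s c n : X s (frame_sum c n). Proof. apply sub_lincomb, frame_in. Qed.

(* Key estimate: by Hahn-Banach (in the separable space [X_s]) and the
   [Theta_s^*]-Bessel property, finite synthesis is bounded by the
   [Theta_s]-norm of the coefficients. *)
Lemma synthesis_estimate s : exists B, 0 <= B /\ forall c c' n m,
  N s (vsub (frame_sum c n) (frame_sum c' m))
    <= B * TN s (vsub (basis_sum c n) (basis_sum c' m)).
Proof.
  destruct (proj2 HDF s) as [Hrep [B0 HB0]]. exists (Rabs B0). split; [apply Rabs_pos|].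
  intros c c' n m. set (v := vsub (frame_sum c n) (frame_sum c' m)).
  set (w := vsub (basis_sum c n) (basis_sum c' m)).
  assert (Sv : X s v) by (apply sub_sub; apply frame_sum_in).
  assert (Sw : Th s w) by (apply sub_sub; apply (basis_sum_in _ _ (HC s))).
  destruct (hahn_banach_separable (F_separable X N HX s) v Sv) as [h [Hh [Hh1 Hhv]]].
  assert (Dh1 : dnorm (X s) (N s) h <= 1).
  { apply (dnorm_le Hh); [lra|]. intros; rewrite Rmult_1_l; auto. }
  destruct (Hrep h Hh) as [h' [Hh' Eh']].
  pose proof (HB0 h Hh) as Hb. rewrite (dualseq_norm_eq _ _ (HC s) h') in Hb by auto.
  assert (E : h v = h' w).
  { unfold v, w. rewrite (dual_sub Hh), (dual_sub Hh') by
      (apply frame_sum_in || apply (basis_sum_in _ _ (HC s))).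
    unfold frame_sum. rewrite !(dual_lincomb Hh) by apply frame_in.
    rewrite !(dual_basis_sum _ _ (HC s) h') by auto.
    f_equal; apply rsum_ext; intros; rewrite Eh'; auto. }
  rewrite <- Hhv, E. eapply Rle_trans; [apply Rle_abs|].
  eapply Rle_trans; [apply (dnorm_bound Hh' w Sw)|].
  apply Rmult_le_compat_r; [apply norm_nonneg; auto|].
  pose proof (Rle_abs B0). pose proof (Rabs_pos B0). pose proof (dnorm_nonneg Hh).
  assert (B0 * dnorm (X s) (N s) h <= Rabs B0 * dnorm (X s) (N s) h)
    by (apply Rmult_le_compat_r; auto).
  assert (Rabs B0 * dnorm (X s) (N s) h <= Rabs B0 * 1) by (apply Rmult_le_compat_l; auto).
  lra.
Qed.

(* Hence the synthesis series of [c] in [Theta_F] is Cauchy, so converges, in each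
   [X_s]; by the embeddings into [X_0] all these limits coincide. *)
Lemma synthesis_limit_s c s : interF Th c -> exists y, X s y /\ conv_in (N s) (frame_sum c) y.
Proof.
  intros Hc. destruct (synthesis_estimate s) as [B [HB0 HK]].
  apply (F_complete X N HX s); [intros; apply frame_sum_in|].
  intros eps Heps.
  destruct (conv_cauchy (basis_sum c) c (fun n => basis_sum_in _ _ (HC s) c n) (Hc s)
              (CB_expansion _ _ (HC s) c (Hc s)) _ (pos_div _ _ HB0 Heps)) as [n0 Hn0].
  exists n0. intros n m Hn Hm. eapply Rle_lt_trans; [apply HK|].
  eapply Rle_lt_trans; [|apply (small_mul B eps HB0 Heps)].
  apply Rmult_le_compat_l; [lra|left; apply Hn0; auto].
Qed.

Lemma synthesis_limit c : interF Th c ->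
  exists y, interF X y /\ forall s, conv_in (N s) (frame_sum c) y.
Proof.
  intros Hc. destruct (synthesis_limit_s c 0%nat Hc) as [y0 [Hy0 C0]].
  assert (E : forall s, X s y0 /\ conv_in (N s) (frame_sum c) y0).
  { intros s. destruct (synthesis_limit_s c s Hc) as [ys [Hys Cs]].
    assert (Cs0 : conv_in (N 0%nat) (frame_sum c) ys).
    { intros eps Heps. destruct (Cs eps Heps) as [n0 Hn0]. exists n0. intros n Hn.
      assert (Hd : X s (vsub (frame_sum c n) ys)) by (apply sub_sub; auto; apply frame_sum_in).
      destruct (F_embed0 X N HX s _ Hd). specialize (Hn0 n Hn). lra. }
    assert (ys = y0).
    { apply (conv_unique (S := X 0%nat) (frame_sum c)); auto.
      - intros; apply frame_sum_in.
      - apply (F_embed0 X N HX s _ Hys). }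
    subst; auto. }
  exists y0. split; intros s; apply E.
Qed.

Definition synthesis (c : Rseq) : V :=
  epsilon (inhabits vzero) (fun y => interF X y /\ forall s, conv_in (N s) (frame_sum c) y).

Lemma synthesis_spec c : interF Th c ->
  interF X (synthesis c) /\ forall s, conv_in (N s) (frame_sum c) (synthesis c).
Proof. intros Hc. unfold synthesis. apply epsilon_spec. apply synthesis_limit; auto. Qed.

Lemma synthesis_char c y : interF Th c -> interF X y ->
  conv_in (N 0%nat) (frame_sum c) y -> synthesis c = y.
Proof.
  intros Hc Hy Cy. destruct (synthesis_spec c Hc) as [HW CW].
  apply (conv_unique (S := X 0%nat) (frame_sum c)); auto. intros; apply frame_sum_in.
Qed.

Lemma synthesis_add c d : interF Th c -> interF Th d ->
  synthesis (vadd c d) = vadd (synthesis c) (synthesis d).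
Proof.
  intros Hc Hd. destruct (synthesis_spec c Hc) as [HWc CWc].
  destruct (synthesis_spec d Hd) as [HWd CWd].
  apply synthesis_char; [apply sub_add; auto|apply sub_add; auto|].
  replace (frame_sum (vadd c d)) with (fun n => vadd (frame_sum c n) (frame_sum d n)).
  - apply conv_add; auto; intros; apply frame_sum_in.
  - apply functional_extensionality; intros n. unfold frame_sum. rewrite <- vsum_add.
    f_equal. apply functional_extensionality; intros i. symmetry; apply vscal_adds.
Qed.

Lemma synthesis_scal a c : interF Th c -> synthesis (vscal a c) = vscal a (synthesis c).
Proof.
  intros Hc. destruct (synthesis_spec c Hc) as [HWc CWc].
  apply synthesis_char; [apply sub_scal; auto|apply sub_scal; auto|].
  replace (frame_sum (vscal a c)) with (fun n => vscal a (frame_sum c n)).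
  - apply conv_scal; auto; intros; apply frame_sum_in.
  - apply functional_extensionality; intros n. unfold frame_sum. rewrite <- vsum_scal.
    f_equal. apply functional_extensionality; intros i. rewrite vscal_mul. reflexivity.
Qed.

(* Passing to the limit in [N_s (sum_(i<n) c_i f_i) <= B * TN_s (sum_(i<n) c_i e_i)]. *)
Lemma synthesis_bound s : exists K, 0 <= K /\
  forall c, interF Th c -> N s (synthesis c) <= K * TN s c.
Proof.
  destruct (synthesis_estimate s) as [B [HB0 HK]]. exists B. split; auto. intros c Hc.
  destruct (synthesis_spec c Hc) as [HW CW].
  apply Rle_cv_lim with (Un := fun n => N s (frame_sum c n))
                       (Vn := fun n => B * TN s (basis_sum c n)).
  - intros n. pose proof (HK c c n 0%nat) as Hn. change (frame_sum c 0) with (@vzero V) in Hn.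
    change (basis_sum c 0) with (@vzero seqVS) in Hn. rewrite !vsub_0r in Hn. exact Hn.
  - apply norm_cont; auto. intros; apply frame_sum_in.
  - apply CV_mult; [apply Un_cv_const|]. apply norm_cont; auto.
    + intros; apply (basis_sum_in _ _ (HC s)).
    + apply (CB_expansion _ _ (HC s)); auto.
Qed.

Lemma synthesis_reconstructs x : interF X x -> synthesis (analysis x) = x.
Proof. intros Hx. apply synthesis_char; auto; [apply analysis_in; auto|apply (Hrec x Hx 0%nat)]. Qed.

Lemma DF_Bessel_F_frame : F_frame X N Th TN g.
Proof.
  split; [split|].
  - exact HB.
  - intros s. destruct (synthesis_bound s) as [K [HK0 HK]]. exists (/ (K + 1)).
    split; [apply Rinv_0_lt_compat; lra|].
    intros x Hx. pose proof (HK (analysis x) (analysis_in x Hx)) as Hb.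
    rewrite synthesis_reconstructs in Hb by auto.
    assert (0 <= TN s (analysis x)) by (apply norm_nonneg, (analysis_in x Hx)).
    apply (Rmult_le_reg_l (K + 1)); [lra|]. rewrite <- Rmult_assoc, Rinv_r, Rmult_1_l by lra.
    change (TN s (fun i => g i x)) with (TN s (analysis x)). nra.
  - exists synthesis. split; [split; [|split; [|split]]|].
    + intros; apply synthesis_add; auto.
    + intros; apply synthesis_scal; auto.
    + intros; apply synthesis_spec; auto.
    + intros s. destruct (synthesis_bound s) as [K [_ HK]]. eauto.
    + exact synthesis_reconstructs.
Qed.

(** ** Part (b): the dual sequence is a pre-DF-frame and a DF-frame *)

(* If [h'] in [Theta_s^*] represents [(h f_i)_i], then [h = h' o analysis] on
   [X_F]: expand [x = sum_i g_i(x) f_i] and [analysis x = sum_i g_i(x) e_i]. *)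
Lemma dual_analysis_identity s h h' : is_dual (X s) (N s) h -> is_dual (Th s) (TN s) h' ->
  (forall i, h' (e i) = h (f i)) -> forall x, interF X x -> h x = h' (analysis x).
Proof.
  intros Hh Hh' Eh x Hx. assert (HUx : Th s (analysis x)) by (apply analysis_in; auto).
  assert (E : (fun n => h (frame_sum (analysis x) n))
              = (fun n => h' (basis_sum (analysis x) n))).
  { apply functional_extensionality. intros n. unfold frame_sum.
    rewrite (dual_lincomb Hh) by apply frame_in. rewrite (dual_basis_sum _ _ (HC s) h') by auto.
    apply rsum_ext; intros; rewrite Eh; auto. }
  apply (UL_sequence (fun n => h (frame_sum (analysis x) n))).
  - apply (dual_cont Hh); [intros; apply frame_sum_in|apply Hx|apply (Hrec x Hx s)].
  - rewrite E. apply (dual_cont Hh'); auto.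
    + intros; apply (basis_sum_in _ _ (HC s)).
    + apply (CB_expansion _ _ (HC s)); auto.
Qed.

(* Lower frame bound: [||h|| <= B_s * ||(h f_i)_i||], where [B_s] is the Bessel
   bound of [g], since [|h x| = |h' (analysis x)| <= ||h'|| B_s N_s x] on the
   dense part [X_F]. *)
Lemma DF_Bessel_lower_bound s : frame_dual_s X N Th TN s f.
Proof.
  split; [apply HDF|].
  destruct (analysis_bound s) as [Bs [HBs HUb]]. exists (/ (Bs + 1)).
  split; [apply Rinv_0_lt_compat; lra|].
  intros h Hh. destruct (proj1 (proj2 HDF s) h Hh) as [h' [Hh' Eh']].
  rewrite (dualseq_norm_eq _ _ (HC s) h') by auto.
  pose proof (dnorm_nonneg Hh) as Dh. pose proof (dnorm_nonneg Hh') as Dh'.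
  assert (Hle : dnorm (X s) (N s) h <= Bs * dnorm (Th s) (TN s) h').
  { apply (dnorm_le Hh); [apply Rmult_le_pos; auto|].
    apply (dense_bound Hh (interF X)); [intros y Hy; apply Hy|apply F_dense; auto
                                        |apply Rmult_le_pos; auto|].
    intros y Hy. rewrite (dual_analysis_identity s h h') by auto.
    eapply Rle_trans; [apply (dnorm_bound Hh'), analysis_in; auto|].
    pose proof (HUb y Hy) as Hu. assert (0 <= N s y) by (apply norm_nonneg, Hy).
    apply Rmult_le_compat_l with (r := dnorm (Th s) (TN s) h') in Hu; auto. nra. }
  apply (Rmult_le_reg_l (Bs + 1)); [lra|]. rewrite <- Rmult_assoc, Rinv_r, Rmult_1_l by lra. nra.
Qed.

(* The reconstruction operator [Theta_s^* -> X_s^*]: a sequence [d], represented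
   by [rep d] in [Theta_s^*], is sent to the extension to [X_s] of
   [rep d o analysis] from the dense part [X_F]. *)
Section DualReconstruction.
Variables (s : nat) (Bs : R).
Hypothesis HBs : 0 <= Bs.
Hypothesis HUb : forall x, interF X x -> TN s (analysis x) <= Bs * N s x.

Definition rep (d : Rseq) : seqVS -> R :=
  epsilon (inhabits (fun _ : seqVS => 0))
    (fun h' => is_dual (Th s) (TN s) h' /\ forall i, h' (e i) = d i).

Definition dual_synthesis (d : Rseq) : V -> R :=
  epsilon (inhabits (fun _ : V => 0))
    (fun w => is_dual (X s) (N s) w /\ (forall y, interF X y -> w y = rep d (analysis y)) /\
              forall x, X s x -> Rabs (w x) <= dnorm (Th s) (TN s) (rep d) * Bs * N s x).

Section OneSequence.
Variable d : Rseq.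
Hypothesis Hd : dualseq (Th s) (TN s) d.

Lemma rep_dual : is_dual (Th s) (TN s) (rep d).
Proof. apply (epsilon_spec _ _ Hd). Qed.

Lemma rep_basis i : rep d (e i) = d i.
Proof. apply (epsilon_spec _ _ Hd). Qed.

Lemma dual_synthesis_spec :
  is_dual (X s) (N s) (dual_synthesis d) /\
  (forall y, interF X y -> dual_synthesis d y = rep d (analysis y)) /\
  forall x, X s x -> Rabs (dual_synthesis d x) <= dnorm (Th s) (TN s) (rep d) * Bs * N s x.
Proof.
  unfold dual_synthesis. apply epsilon_spec. pose proof rep_dual as Hr. pose proof (dnorm_nonneg Hr) as Dr.
  apply (dense_extension (interF X)); [intros y Hy; apply Hy|apply XF_subspace|apply F_dense; auto
                                       |apply Rmult_le_pos; auto| | |].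
  - intros. rewrite analysis_add by auto. apply (dual_add Hr); apply analysis_in; auto.
  - intros. rewrite analysis_scal by auto. apply (dual_scal Hr); apply analysis_in; auto.
  - intros y Hy. eapply Rle_trans; [apply (dnorm_bound Hr), analysis_in; auto|].
    rewrite Rmult_assoc. apply Rmult_le_compat_l; auto.
Qed.

Lemma dual_synthesis_dual : is_dual (X s) (N s) (dual_synthesis d).
Proof. apply dual_synthesis_spec. Qed.

Lemma dual_synthesis_on_XF y : interF X y -> dual_synthesis d y = rep d (analysis y).
Proof. apply dual_synthesis_spec. Qed.

Lemma dual_synthesis_unique w : is_dual (X s) (N s) w ->
  (forall y, interF X y -> w y = rep d (analysis y)) ->
  forall x, X s x -> dual_synthesis d x = w x.
Proof.
  intros Hw Ew.
  apply (dual_eq_on_dense (interF X) _ _ (fun y Hy => Hy s) (F_dense X N HX s)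
           dual_synthesis_dual Hw).
  intros y Hy. rewrite Ew by auto. apply dual_synthesis_on_XF; auto.
Qed.
End OneSequence.

Lemma dualseq_plus c d : dualseq (Th s) (TN s) c -> dualseq (Th s) (TN s) d ->
  dualseq (Th s) (TN s) (fun i => c i + d i).
Proof.
  intros Hc Hd. exists (fun y => rep c y + rep d y).
  split; [apply dual_plus; apply rep_dual; auto|]. intros i. rewrite !rep_basis; auto.
Qed.

Lemma dualseq_mult a c : dualseq (Th s) (TN s) c -> dualseq (Th s) (TN s) (fun i => a * c i).
Proof.
  intros Hc. exists (fun y => a * rep c y).
  split; [apply dual_mult, rep_dual; auto|]. intros i. rewrite rep_basis; auto.
Qed.

(* Linearity follows from uniqueness, boundedness from the extension bound. *)
Lemma dual_synthesis_bounded : bounded_op_dual_s X N Th TN s dual_synthesis.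
Proof.
  split; [|split; [|split]].
  - intros c d Hc Hd x Hx. pose proof (dualseq_plus c d Hc Hd) as Hcd.
    apply (dual_synthesis_unique _ Hcd (fun x => dual_synthesis c x + dual_synthesis d x));
      auto; [apply dual_plus; apply dual_synthesis_dual; auto|].
    intros y Hy. rewrite !dual_synthesis_on_XF by auto.
    apply (CB_dual_unique _ _ (HC s) (fun z => rep c z + rep d z)); [apply dual_plus; apply rep_dual; auto
                                                  |apply rep_dual; auto| |apply analysis_in; auto].
    intros i. rewrite !rep_basis; auto.
  - intros a c Hc x Hx. pose proof (dualseq_mult a c Hc) as Hac.
    apply (dual_synthesis_unique _ Hac (fun x => a * dual_synthesis c x));
      auto; [apply dual_mult, dual_synthesis_dual; auto|].
    intros y Hy. rewrite !dual_synthesis_on_XF by auto.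
    apply (CB_dual_unique _ _ (HC s) (fun z => a * rep c z)); [apply dual_mult, rep_dual; auto
                                                  |apply rep_dual; auto| |apply analysis_in; auto].
    intros i. rewrite !rep_basis; auto.
  - intros c Hc. apply dual_synthesis_dual; auto.
  - exists Bs. intros c Hc. pose proof (rep_dual c Hc) as Hr.
    rewrite (dualseq_norm_eq _ _ (HC s) (rep c)) by (auto; apply rep_basis; auto).
    apply (dnorm_le (dual_synthesis_dual c Hc)); [apply Rmult_le_pos; auto; apply (dnorm_nonneg Hr)|].
    intros x Hx. rewrite (Rmult_comm Bs). apply dual_synthesis_spec; auto.
Qed.

(* Reconstruction in [X_s^*]: both sides agree with [rep (h o f) o analysis] on [X_F]. *)
Lemma dual_synthesis_reconstructs h : is_dual (X s) (N s) h ->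
  forall x, X s x -> dual_synthesis (fun i => h (f i)) x = h x.
Proof.
  intros Hh. pose proof (proj1 (proj2 HDF s) h Hh) as Hd.
  apply dual_synthesis_unique; auto. intros y Hy.
  apply (dual_analysis_identity s); auto; [apply rep_dual; auto|]. intros i; apply rep_basis; auto.
Qed.
End DualReconstruction.

Lemma DF_Bessel_Banach_frame s : Banach_frame_dual_s X N Th TN s f.
Proof.
  split; [apply DF_Bessel_lower_bound|].
  destruct (analysis_bound s) as [Bs [HBs HUb]]. exists (dual_synthesis s Bs).
  split; [apply dual_synthesis_bounded; auto|]. intros h Hh x Hx.
  apply dual_synthesis_reconstructs; auto.
Qed.
End FromDFBessel.
End Frames.

(* Part (b): [DF_Bessel_lower_bound] and [DF_Bessel_Banach_frame]; these hold
   for all CB-spaces [Theta_s]. *)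
Theorem theorem3p6 (V : RVS) (X : nat -> V -> Prop) (N : nat -> V -> R)
    (Th : nat -> seqVS -> Prop) (TN : nat -> seqVS -> R) (g : nat -> V -> R) :
  vs_axioms V ->
  Fseq X N ->
  (forall s, CB (Th s) (TN s)) -> Fseq Th TN ->
  F_Bessel X N Th TN g ->
  ((exists f : nat -> V, DF_Bessel X N Th TN f /\ reconstructs X N g f)
     <-> F_frame X N Th TN g)
  /\
  (forall f : nat -> V, DF_Bessel X N Th TN f -> reconstructs X N g f ->
     ((forall s, CB (Th s) (TN s) /\ CB (dualseq (Th s) (TN s)) (dualseq_norm (Th s) (TN s)))
        -> pre_DF_frame X N Th TN f) /\
     ((forall s, CB (Th s) (TN s) /\ reflexive (Th s) (TN s))
        -> DF_frame X N Th TN f)).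
Proof.
  intros Hv HX HC HT HB. split; [split|].
  - intros [f [Hdf Hrec]]. eapply DF_Bessel_F_frame; eauto.
  - intros [_ [W [HW Hrec]]]. exists (fun i => W (e i)).
    split; [eapply F_frame_DF_Bessel | eapply F_frame_reconstructs]; eauto.
  - intros f Hdf Hrec. split; intros _; (split; [apply Hdf|]); intros s.
    + eapply DF_Bessel_lower_bound; eauto.
    + eapply DF_Bessel_Banach_frame; eauto.
Qed.
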